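(* Let $S\subset\{2,\dots,p\}$ with cardinality ${\rm s}$, let $\gamma^S_S:=\Sigma_{S,S}^{-1}\mathbb{E}\mathbf{x}_S^T\mathbf{x}_{-1}\gamma^0$ be the coefficient vector of the projection of $\mathbf{x}_{-1}\gamma^0$ on $\mathbf{x}_S$, let $\gamma^S\in\mathbb{R}^{p-1}$ be $\gamma^S_S$ completed with zeroes outside $S$, and let $v^S:=\Sigma_{-1,-1}(\gamma^0-\gamma^S)$ with $v^S_{-S}$ its subvector of entries indexed by $\{2,\dots,p\}\setminus S$. Then $$\|v^S_{-S}\|_\infty\le\big\vert\!\big\vert\!\big\vert\Sigma_{-S,-S}-\Sigma_{-S,S}\Sigma_{S,S}^{-1}\Sigma_{S,-S}\big\vert\!\big\vert\!\big\vert_1\,\|\gamma^0_{-S}\|_\infty.$$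
   Context: $\mathbf{x}=(\mathbf{x}_1,\dots,\mathbf{x}_p)$ is a zero-mean Gaussian row vector with nonsingular covariance $\Sigma$; $\mathbf{x}_{-1}=(\mathbf{x}_2,\dots,\mathbf{x}_p)$, $\Sigma_{-1,-1}=\mathbb{E}\mathbf{x}_{-1}^T\mathbf{x}_{-1}$, $\gamma^0:=\Sigma_{-1,-1}^{-1}\mathbb{E}\mathbf{x}_{-1}^T\mathbf{x}_1\in\mathbb{R}^{p-1}$, with entries indexed by $\{2,\dots,p\}$. For $S\subset\{2,\dots,p\}$, $-S:=\{2,\dots,p\}\setminus S$, $\mathbf{x}_S=\{\mathbf{x}_j\}_{j\in S}$, $\mathbf{x}_{-S}=\{\mathbf{x}_j\}_{j\in -S}$, $\Sigma_{S,S}=\mathbb{E}\mathbf{x}_S^T\mathbf{x}_S$, $\Sigma_{-S,-S}=\mathbb{E}\mathbf{x}_{-S}^T\mathbf{x}_{-S}$, $\Sigma_{S,-S}=\mathbb{E}\mathbf{x}_S^T\mathbf{x}_{-S}=\Sigma_{-S,S}^T$; $\gamma^0_{-S}$ is the subvector of $\gamma^0$ indexed by $-S$. For a matrix $A=(a_{j,k})$, $\vert\!\vert\!\vert A\vert\!\vert\!\vert_1:=\max_j\sum_k|a_{j,k}|$. *)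

From HB Require Import structures.
From mathcomp Require Import all_boot all_order all_algebra.
Set Implicit Arguments. Unset Strict Implicit. Unset Printing Implicit Defensive.
Import Order.TTheory GRing.Theory Num.Theory.
Local Open Scope ring_scope.

(* Conventions: p = n.+1 variables x_1..x_p are indexed by 'I_(n.+1), with
   x_1 <-> ord0 and x_{k+1} (k in 1..n) <-> lift ord0 (k-1).  Thus the index
   set {2,...,p} is 'I_n (via lift ord0), and S is a {set 'I_n}.
   Sigma : 'M_(n.+1) is the covariance matrix E x^T x. *)

Section Defs.
Variable R : realFieldType.
Variable n : nat.

Definition Sig11 (Sigma : 'M[R]_(n.+1)) : 'M[R]_n :=
  \matrix_(i, j) Sigma (lift ord0 i) (lift ord0 j).

Definition sig1 (Sigma : 'M[R]_(n.+1)) : 'cV[R]_n :=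
  \col_i Sigma (lift ord0 i) ord0.

Definition gamma0 (Sigma : 'M[R]_(n.+1)) : 'cV[R]_n :=
  invmx (Sig11 Sigma) *m sig1 Sigma.

Definition idx (S : {set 'I_n}) : 'I_#|S| -> 'I_n := enum_val.

Definition Sblock (Sigma : 'M[R]_(n.+1)) (A B : {set 'I_n}) : 'M[R]_(#|A|, #|B|) :=
  mxsub (@idx A) (@idx B) (Sig11 Sigma).

Definition SrowS (Sigma : 'M[R]_(n.+1)) (S : {set 'I_n}) : 'M[R]_(#|S|, n) :=
  rowsub (@idx S) (Sig11 Sigma).

Definition subv (A : {set 'I_n}) (v : 'cV[R]_n) : 'cV[R]_#|A| := rowsub (@idx A) v.

Definition extend0 (S : {set 'I_n}) (w : 'cV[R]_#|S|) : 'cV[R]_n :=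
  \col_i \sum_(k < #|S| | idx k == i) w k 0.

Definition gammaSS (Sigma : 'M[R]_(n.+1)) (S : {set 'I_n}) : 'cV[R]_#|S| :=
  invmx (Sblock Sigma S S) *m (SrowS Sigma S *m gamma0 Sigma).

Definition gammaS (Sigma : 'M[R]_(n.+1)) (S : {set 'I_n}) : 'cV[R]_n :=
  extend0 (gammaSS Sigma S).

Definition vS (Sigma : 'M[R]_(n.+1)) (S : {set 'I_n}) : 'cV[R]_n :=
  Sig11 Sigma *m (gamma0 Sigma - gammaS Sigma S).

End Defs.

Definition supnorm (R : realFieldType) (m : nat) (v : 'cV[R]_m) : R :=
  \big[Num.max/0]_(i < m) `|v i 0|.

Definition mxnorm1 (R : realFieldType) (m k : nat) (A : 'M[R]_(m, k)) : R :=
  \big[Num.max/0]_(j < m) \sum_(l < k) `|A j l|.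

(* nonsingular covariance matrix: symmetric positive definite *)
Definition posdef (R : realFieldType) (m : nat) (A : 'M[R]_m) : Prop :=
  A^T = A /\ forall u : 'rV[R]_m, u != 0 -> 0 < (u *m A *m u^T) 0 0.

From HB Require Import structures.
From mathcomp Require Import all_boot all_order all_algebra.
Set Implicit Arguments. Unset Strict Implicit. Unset Printing Implicit Defensive.
Import Order.TTheory GRing.Theory Num.Theory.
Local Open Scope ring_scope.

(* Write A, B, C, D for the blocks Sigma_{S,S}, Sigma_{S,-S}, Sigma_{-S,S},
   Sigma_{-S,-S}.  Splitting gamma^0 along S and -S gives
   gamma^S_S = gamma^0_S + A^-1 B gamma^0_{-S}, hence
   v^S_{-S} = (D - C A^-1 B) gamma^0_{-S}: the Schur complement of A applied
   to gamma^0_{-S}.  The bound is then |Mx|_oo <= |||M|||_1 |x|_oo.  The block A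
   is invertible because principal submatrices of a positive definite matrix
   are positive definite. *)

Section PositiveDefinite.
Variable R : realFieldType.

Lemma posdef_unitmx m (A : 'M[R]_m) : posdef A -> A \in unitmx.
Proof.
move=> [_ A_pos]; rewrite unitmxE unitfE; apply/negP => /det0P [u u_neq0 uA0].
by have := A_pos u u_neq0; rewrite uA0 mul0mx mxE ltxx.
Qed.

Lemma posdef_mxsub m k (f : 'I_m -> 'I_k) (A : 'M[R]_k) :
  injective f -> posdef A -> posdef (mxsub f f A).
Proof.
move=> f_inj [A_sym A_pos]; split; first by rewrite trmx_mxsub A_sym.
pose P : 'M[R]_(m, k) := rowsub f 1%:M.
have subAE : mxsub f f A = P *m A *m P^T.
  by rewrite trmx_mxsub trmx1 mulmx_colsub mulmx1 -rowsubE -mxsubcr.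
move=> u u_neq0; rewrite subAE !mulmxA -(mulmxA _ P^T) -trmx_mul; apply: A_pos.
apply: contraNneq u_neq0 => /rowP uP0; apply/eqP/rowP => a.
have := uP0 (f a); rewrite /P !mxE; under eq_bigr do rewrite !mxE.
rewrite (bigD1 a) //= eqxx mulr1 big1 ?addr0 => [//|b b_neq_a].
by rewrite (inj_eq f_inj) (negbTE b_neq_a) mulr0.
Qed.

End PositiveDefinite.

Section SupNorm.
Variable R : realFieldType.

Lemma supnorm_ge0 m (v : 'cV[R]_m) : 0 <= supnorm v.
Proof. exact: bigmax_ge_id. Qed.

Lemma mxnorm1_ge0 m k (M : 'M[R]_(m, k)) : 0 <= mxnorm1 M.
Proof. exact: bigmax_ge_id. Qed.

Lemma supnorm_mulmx m k (M : 'M[R]_(m, k)) (v : 'cV[R]_k) :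
  supnorm (M *m v) <= mxnorm1 M * supnorm v.
Proof.
apply: bigmax_le => [|i _]; first by rewrite mulr_ge0 ?mxnorm1_ge0 ?supnorm_ge0.
rewrite mxE; apply: (le_trans (ler_norm_sum _ _ _)).
apply: (@le_trans _ _ (\sum_l `|M i l| * supnorm v)).
  apply: ler_sum => l _; rewrite normrM ler_wpM2l //.
  exact: (le_bigmax _ (fun j => `|v j 0|) l).
rewrite -mulr_suml ler_wpM2r ?supnorm_ge0 //.
exact: (le_bigmax _ (fun j => \sum_(l < k) `|M j l|) i).
Qed.

End SupNorm.

Lemma big_enum_val_setC (V : nmodType) (I : finType) (A : {set I}) (F : I -> V) :
  \sum_i F i = \sum_(k < #|A|) F (enum_val k) + \sum_(k < #|~: A|) F (enum_val k).
Proof.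
rewrite (bigID (mem A)) -!big_enum_val; congr (_ + _).
by apply: eq_bigl => i; rewrite in_setC.
Qed.

Section BlockProducts.
Variables (R : realFieldType) (n : nat).

Lemma mulmx_split_setC m (M : 'M[R]_(m, n)) (T : {set 'I_n}) (v : 'cV[R]_n) :
  M *m v = colsub (@idx n T) M *m subv T v
           + colsub (@idx n (~: T)) M *m subv (~: T) v.
Proof.
apply/matrixP => a b; rewrite !mxE (big_enum_val_setC T).
by congr (_ + _); apply: eq_bigr => k _; rewrite !mxE.
Qed.

Lemma mulmx_extend0 m (M : 'M[R]_(m, n)) (T : {set 'I_n}) (w : 'cV[R]_#|T|) :
  M *m extend0 w = colsub (@idx n T) M *m w.
Proof.
apply/matrixP => a b; rewrite !mxE.
under eq_bigr => l _ do rewrite !mxE big_distrr /=.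
rewrite (exchange_big_dep xpredT) //=; apply: eq_bigr => k _; rewrite !mxE.
by rewrite (big_pred1 (idx k)) ?ord1 // => l; rewrite eq_sym.
Qed.

End BlockProducts.

Definition schur_compl (R : realFieldType) (n : nat) (Sigma : 'M[R]_(n.+1))
    (S : {set 'I_n}) : 'M[R]_#|~: S| :=
  Sblock Sigma (~: S) (~: S)
  - Sblock Sigma (~: S) S *m invmx (Sblock Sigma S S) *m Sblock Sigma S (~: S).

Section Projection.
Variables (R : realFieldType) (n : nat) (Sigma : 'M[R]_(n.+1)) (S : {set 'I_n}).

Lemma posdef_Sblock_unitmx (T : {set 'I_n}) :
  posdef Sigma -> Sblock Sigma T T \in unitmx.
Proof.
move=> Sigma_pd; apply: posdef_unitmx.
rewrite /Sblock /Sig11 -[\matrix_(i, j) _]/(mxsub (lift ord0) (lift ord0) Sigma).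
rewrite -mxsub_comp; apply: posdef_mxsub Sigma_pd => i j /= /lift_inj.
exact: enum_val_inj.
Qed.

Lemma rowsub_Sig11_mulmx (T : {set 'I_n}) (v : 'cV[R]_n) :
  rowsub (@idx n T) (Sig11 Sigma) *m v
  = Sblock Sigma T S *m subv S v + Sblock Sigma T (~: S) *m subv (~: S) v.
Proof. by rewrite (mulmx_split_setC _ S) -!mxsubcr. Qed.

Hypothesis SS_unit : Sblock Sigma S S \in unitmx.

Lemma gammaSS_split :
  gammaSS Sigma S = subv S (gamma0 Sigma)
    + invmx (Sblock Sigma S S) *m Sblock Sigma S (~: S) *m subv (~: S) (gamma0 Sigma).
Proof.
rewrite /gammaSS /SrowS rowsub_Sig11_mulmx mulmxDr !mulmxA.
by rewrite mulVmx // mul1mx.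
Qed.

Lemma subv_vS_schur :
  subv (~: S) (vS Sigma S) = schur_compl Sigma S *m subv (~: S) (gamma0 Sigma).
Proof.
rewrite /vS /gammaS /subv -mul_rowsub_mx mulmxBr mulmx_extend0.
rewrite rowsub_Sig11_mulmx -mxsubcr gammaSS_split.
by rewrite mulmxDr mulmxBl !mulmxA opprD addrACA subrr add0r.
Qed.

End Projection.

Theorem lemma3p3 (R : realFieldType) (n : nat) (Sigma : 'M[R]_(n.+1))
    (S : {set 'I_n}) :
  posdef Sigma ->
  supnorm (subv (~: S) (vS Sigma S)) <=
    mxnorm1 (Sblock Sigma (~: S) (~: S)
             - Sblock Sigma (~: S) S *m invmx (Sblock Sigma S S)
                 *m Sblock Sigma S (~: S))
    * supnorm (subv (~: S) (gamma0 Sigma)).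
Proof.
move=> Sigma_pd.
rewrite subv_vS_schur ?posdef_Sblock_unitmx //.
exact: supnorm_mulmx.
Qed.
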